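(* Let $G$ be a finite simple graph, $s\geq1$, and $e_1,\dots,e_s$ edges of $G$ (repetitions allowed). Every minimal monomial generator of $(I(G)^{s+1}:e_1\cdots e_s)$ is of the form $uv$ for vertices $u,v$ (possibly $u=v$) such that either $uv$ is an edge of $G$ or $u$ and $v$ are even-connected with respect to $e_1\cdots e_s$.
   Context: $S=K[\,x : x\in V(G)\,]$, $I(G)=(xy : xy\text{ an edge of } G)$, edges identified with degree-2 monomials, $(J:m)=\{f\in S : fm\in J\}$. Even-connection: vertices $u,v$ (possibly equal) are even-connected with respect to $e_1,\dots,e_s$ if there is a sequence of vertices $p_0,\dots,p_{2k+1}$, $k\ge1$ (vertices may repeat), with (1) $p_0=u$, $p_{2k+1}=v$; (2) for all $0\le l\le k-1$, $p_{2l+1}p_{2l+2}=e_i$ for some $i$; (3) for every $i$, $|\{l\ge0: p_{2l+1}p_{2l+2}=e_i\}|\le|\{j: e_j=e_i\}|$; (4) for all $0\le r\le 2k$, $p_rp_{r+1}$ is an edge of $G$. *)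

From mathcomp Require Import all_boot all_order all_algebra.
From mathcomp Require Import mpoly.
Set Implicit Arguments. Unset Strict Implicit. Unset Printing Implicit Defensive.
Import GRing.Theory.
Local Open Scope ring_scope.

Definition gen_ideal (R : comRingType) (A : R -> Prop) : R -> Prop :=
  fun f => exists (m : nat) (c g : 'I_m -> R),
    (forall i, A (g i)) /\ f = \sum_(i < m) c i * g i.

Definition ideal_pow (R : comRingType) (I : R -> Prop) (k : nat) : R -> Prop :=
  gen_ideal (fun f => exists g : 'I_k -> R, (forall i, I (g i)) /\
                                           f = \prod_(i < k) g i).

Definition colon (R : comRingType) (J : R -> Prop) (m : R) : R -> Prop :=
  fun f => J (f * m).

Definition simple_graph (n : nat) (G : rel 'I_n) : Prop :=
  (forall x y, G x y = G y x) /\ (forall x, ~~ G x x).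

Definition edge_ideal (K : fieldType) (n : nat) (G : rel 'I_n)
  : {mpoly K[n]} -> Prop :=
  gen_ideal (fun f => exists a b : 'I_n, G a b /\ f = 'X_a * 'X_b).

Definition min_mon_gen (K : fieldType) (n : nat) (J : {mpoly K[n]} -> Prop)
  (m : 'X_{1..n}) : Prop :=
  J 'X_[m] /\ forall m' : 'X_{1..n}, (m' <= m)%MM -> m' != m -> ~ J 'X_[m'].

Definition edge_eq (n : nat) (x y : 'I_n * 'I_n) : bool :=
  ((x.1 == y.1) && (x.2 == y.2)) || ((x.1 == y.2) && (x.2 == y.1)).

Definition even_connected (n s : nat) (G : rel 'I_n) (e : 'I_s -> 'I_n * 'I_n)
  (u v : 'I_n) : Prop :=
  exists (k : nat) (p : nat -> 'I_n),
    [/\ (1 <= k)%N,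
        p 0%N = u /\ p (2 * k + 1)%N = v,
        (forall l, (l < k)%N -> exists i, edge_eq (p (2 * l + 1)%N, p (2 * l + 2)%N) (e i)),
        (forall i, (#|[set l : 'I_k | edge_eq (p (2 * l + 1)%N, p (2 * l + 2)%N) (e i)]|
                    <= #|[set j | edge_eq (e j) (e i)]|)%N) &
        (forall r, (r <= 2 * k)%N -> G (p r) (p r.+1))].

From mathcomp Require Import all_boot all_order all_algebra.
From mathcomp Require Import mpoly.
From mathcomp Require Import zify.
Set Implicit Arguments. Unset Strict Implicit. Unset Printing Implicit Defensive.
Import GRing.Theory.

(* Since m e_1 ... e_s is divisible by a product of s+1 edges f_1, ..., f_(s+1)
   of G, start from the s+1 one-edge walks f_j and the s unused edges e_i, and
   keep as invariant that the ends of the walks, counted with multiplicity, fit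
   into m times the unused e_i.  Using up one e_i = xy costs one walk: if too
   many walks end at x, either a walk ending at x can be dropped, or it is glued
   through xy to a walk ending at y; otherwise any walk is dropped.  The last
   walk runs from u to v with x_u x_v | m, and its G-steps together with the
   e_i it does not use are s+1 edges dividing x_u x_v e_1 ... e_s.  So x_u x_v
   lies in the colon ideal, hence equals m by minimality, and the walk is either
   the edge uv or an even connection between u and v. *)


Section EdgeEq.
Variable n : nat.
Implicit Types (a b x : 'I_n) (f g h : 'I_n * 'I_n).

Definition pair_mult f x : nat := (f.1 == x) + (f.2 == x).

Lemma edge_eq_refl f : edge_eq f f.
Proof. by rewrite /edge_eq !eqxx. Qed.

Lemma edge_eq_sym f g : edge_eq f g -> edge_eq g f.
Proof.
case: f g => [a1 a2] [b1 b2]; rewrite /edge_eq /=.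
by case/orP => /andP [/eqP -> /eqP ->]; rewrite !eqxx ?orbT.
Qed.

Lemma edge_eq_trans g f h : edge_eq f g -> edge_eq g h -> edge_eq f h.
Proof.
case: f g h => [a1 a2] [b1 b2] [c1 c2]; rewrite /edge_eq /=.
by case/orP => /andP [/eqP -> /eqP ->]; case/orP => /andP [/eqP -> /eqP ->];
  rewrite !eqxx ?orbT.
Qed.

Lemma edge_eq_swap a b : edge_eq (a, b) (b, a).
Proof. by rewrite /edge_eq /= !eqxx orbT. Qed.

Lemma pair_mult_edge_eq f g x : edge_eq f g -> pair_mult f x = pair_mult g x.
Proof.
case: f g => [a1 a2] [b1 b2]; rewrite /edge_eq /pair_mult /=.
by case/orP => /andP [/eqP -> /eqP ->] //; apply: addnC.
Qed.

End EdgeEq.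

Lemma sum_nat_seq_gt0_ex (T : eqType) (r : seq T) (F : T -> nat) :
  (0 < \sum_(x <- r) F x)%N -> exists2 x, x \in r & (0 < F x)%N.
Proof.
rewrite lt0n sum_nat_seq_neq0 => /hasP [x xr Fx].
by exists x => //; rewrite lt0n.
Qed.

Section Graph.
Variables (n : nat) (G : rel 'I_n).

Definition gedges (F : seq ('I_n * 'I_n)) := forall f, f \in F -> G f.1 f.2.

Section Walks.
Variables (s : nat) (e : 'I_s -> 'I_n * 'I_n).
Hypothesis Gsym : forall x y, G x y = G y x.
Hypothesis eG : forall i, G (e i).1 (e i).2.

Lemma edge_eq_G a b i : edge_eq (a, b) (e i) -> G a b.
Proof.
have := eG i; case: (e i) => b1 b2 /= Gb; rewrite /edge_eq /=.
by case/orP => /andP [/eqP -> /eqP ->] //; rewrite Gsym.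
Qed.

(* [walk u v rs bl]: a walk u = p_0, p_1, ..., p_(2k+1) = v of G whose
   steps p_(2l+1) p_(2l+2) are the edges [e (nth rs l)]; [bl] lists the
   remaining k+1 steps p_(2l) p_(2l+1). *)
Inductive walk : 'I_n -> 'I_n -> seq 'I_s -> seq ('I_n * 'I_n) -> Prop :=
| walk_edge u v : G u v -> walk u v [::] [:: (u, v)]
| walk_cons u a b v i rs bl : G u a -> edge_eq (a, b) (e i) -> walk b v rs bl ->
    walk u v (i :: rs) ((u, a) :: bl).

Lemma walk_gedges u v rs bl : walk u v rs bl -> gedges bl.
Proof.
elim=> [u' v' Guv | u' a b v' i rs' bl' Gua _ _ IH] f.
  by rewrite inE => /eqP ->.
by rewrite inE => /orP [/eqP -> //|/IH].
Qed.

Lemma walk_size u v rs bl : walk u v rs bl -> size bl = (size rs).+1.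
Proof. by elim=> //= *; congr S. Qed.

Lemma walk_pair_mult u v rs bl x : walk u v rs bl ->
  (\sum_(f <- bl) pair_mult f x = pair_mult (u, v) x + \sum_(j <- rs) pair_mult (e j) x)%N.
Proof.
elim=> [u' v' _ | u' a b v' i rs' bl' _ Hab _ IH].
  by rewrite big_seq1 big_nil addn0.
rewrite !big_cons IH -(pair_mult_edge_eq x Hab) /pair_mult /=; lia.
Qed.

Lemma walk_cat u x rs1 bl1 y v i rs2 bl2 : walk u x rs1 bl1 ->
  edge_eq (x, y) (e i) -> walk y v rs2 bl2 ->
  walk u v (rs1 ++ i :: rs2) (bl1 ++ bl2).
Proof.
move=> W1 Hxy W2; elim: W1 Hxy => [u' x' Gux | u' a b x' j rs' bl' Gua Hab _ IH] Hxy /=.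
  exact: walk_cons Gux Hxy W2.
exact: walk_cons Gua Hab (IH Hxy).
Qed.

Lemma walk_rev u v rs bl :
  walk u v rs bl -> walk v u (rev rs) (rev [seq (f.2, f.1) | f <- bl]).
Proof.
elim=> [u' v' Guv | u' a b v' i rs' bl' Gua Hab _ IH].
  by apply: walk_edge; rewrite Gsym.
rewrite rev_cons map_cons rev_cons -!cats1.
apply: walk_cat IH (edge_eq_trans (edge_eq_swap b a) Hab) _.
by apply: walk_edge; rewrite Gsym.
Qed.

Definition walk_verts (bl : seq ('I_n * 'I_n)) := flatten [seq [:: f.1; f.2] | f <- bl].

Lemma walk_vertsP u v rs bl x0 i0 : walk u v rs bl ->
  let p := nth x0 (walk_verts bl) in
  [/\ p 0 = u, p (size rs).*2.+1 = v,
      forall l, l < size rs -> edge_eq (p l.*2.+1, p l.*2.+2) (e (nth i0 rs l)) &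
      forall r, r <= (size rs).*2 -> G (p r) (p r.+1)].
Proof.
elim=> [u' v' Guv | u' a b v' i rs' bl' Gua Hab _ [IH1 IH2 IH3 IH4]].
  by split => //; case.
have -> : walk_verts ((u', a) :: bl') = u' :: a :: walk_verts bl' by [].
split => //.
- case=> [|l]; first by rewrite /= IH1.
  by rewrite /= doubleS ltnS => /IH3.
- case=> [|[|r]] Hr //; first by rewrite /= IH1; exact: edge_eq_G Hab.
  by move: Hr; rewrite /= !doubleS !ltnS => /IH4.
Qed.

Lemma walk_even_connected u v rs bl : walk u v rs bl -> rs != [::] -> uniq rs ->
  even_connected G e u v.
Proof.
case: rs => [//|i0 rs'] W _ Urs; set rs := i0 :: rs' in W Urs *.
have [p0 pk pe pG] := walk_vertsP u i0 W.
exists (size rs), (nth u (walk_verts bl)); split => //.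
- by rewrite mul2n addn1.
- by move=> l Hl; exists (nth i0 rs l); rewrite mul2n addn1 addn2; apply: pe.
- move=> i; have nth_inj : injective (fun l : 'I_(size rs) => nth i0 rs l).
    by move=> a b /eqP; rewrite nth_uniq // => /eqP /val_inj.
  rewrite -(card_imset _ nth_inj); apply/subset_leq_card/subsetP => j.
  case/imsetP => l; rewrite inE => Hl ->; rewrite inE.
  by apply: edge_eq_trans Hl; rewrite mul2n addn1 addn2; apply/edge_eq_sym/pe.
- by move=> r; rewrite mul2n => /pG.
Qed.

Lemma walk_edge_or_even_connected u v rs bl : walk u v rs bl -> uniq rs ->
  G u v \/ even_connected G e u v.
Proof.
case: rs => [|i rs] W Urs; first by left; inversion W.
by right; apply: walk_even_connected W _ Urs.
Qed.

(* The G-steps of the walk and the unused edges [e j] are s+1 edges of G whose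
   product is x_u x_v e_1 ... e_s. *)
Lemma walk_complete u v rs bl : walk u v rs bl -> uniq rs ->
  exists F, [/\ size F = s.+1, gedges F &
    forall x, \sum_(f <- F) pair_mult f x =
              pair_mult (u, v) x + \sum_(j < s) pair_mult (e j) x]%N.
Proof.
move=> W Urs; set rest := [seq j <- enum 'I_s | j \notin rs].
have rs_rest : perm_eq (rs ++ rest) (enum 'I_s).
  apply: uniq_perm.
  - rewrite cat_uniq Urs filter_uniq ?enum_uniq //= andbT.
    by apply/hasPn => j; rewrite mem_filter => /andP [].
  - exact: enum_uniq.
  - by move=> j; rewrite mem_cat mem_filter mem_enum; case: (j \in rs).
exists (bl ++ map e rest); split.
- rewrite size_cat size_map (walk_size W) addSn -size_cat (perm_size rs_rest).
  by rewrite size_enum_ord.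
- move=> f; rewrite mem_cat => /orP [/(walk_gedges W) //|/mapP [j _ ->]].
  exact: eG.
- move=> x; rewrite big_cat big_map /= (walk_pair_mult x W) -addnA.
  by rewrite -big_cat (perm_big _ rs_rest) big_enum.
Qed.

Lemma walk_to f rs bl x : walk f.1 f.2 rs bl -> 0 < pair_mult f x ->
  exists a rs' bl',
    [/\ walk a x rs' bl', pair_mult (a, x) =1 pair_mult f & perm_eq rs' rs].
Proof.
case: f => u v /= W; case: (eqVneq v x) => [<-|vx] ux.
  by exists u, rs, bl; split=> [//|z //|]; apply: perm_refl.
have <- : u = x by apply/eqP; move: ux; rewrite /pair_mult /= (negPf vx) addn0 lt0b.
exists v, (rev rs), (rev [seq (f.2, f.1) | f <- bl]); split.
- exact: walk_rev.
- by move=> z; rewrite /pair_mult addnC.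
- by rewrite perm_rev.
Qed.

Lemma walk_from f rs bl x : walk f.1 f.2 rs bl -> 0 < pair_mult f x ->
  exists b rs' bl',
    [/\ walk x b rs' bl', pair_mult (x, b) =1 pair_mult f & perm_eq rs' rs].
Proof.
move=> W /(walk_to W) [a [rs' [bl' [W' Pa Prs]]]].
exists a, (rev rs'), (rev [seq (f.2, f.1) | f <- bl']); split.
- exact: walk_rev.
- by move=> z; rewrite -Pa /pair_mult addnC.
- by rewrite perm_rev.
Qed.

Section Decomposition.
Hypothesis Girr : forall x, ~~ G x x.
Variable m : 'I_n -> nat.

Local Notation lwalk := ('I_n * 'I_n * seq 'I_s * seq ('I_n * 'I_n))%type.
Local Notation ends w := w.1.1.
Local Notation labels w := w.1.2.

Definition lwalk_ok (w : lwalk) := walk (ends w).1 (ends w).2 (labels w) w.2.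

Definition load (Ws : seq lwalk) x := \sum_(w <- Ws) pair_mult (ends w) x.

Definition budget (R : seq 'I_s) x := m x + \sum_(j <- R) pair_mult (e j) x.

Definition decomp (Ws : seq lwalk) (R : seq 'I_s) :=
  [/\ forall w, w \in Ws -> lwalk_ok w,
      forall j, count_mem j R + \sum_(w <- Ws) count_mem j (labels w) <= 1,
      size Ws = (size R).+1 &
      forall x, load Ws x <= budget R x].

Lemma budget_cons i R x : budget (i :: R) x = pair_mult (e i) x + budget R x.
Proof. by rewrite /budget big_cons addnCA. Qed.

Lemma load_rem Ws w x : w \in Ws ->
  load Ws x = pair_mult (ends w) x + load (rem w Ws) x.
Proof. exact: big_rem. Qed.

Lemma decomp_rem Ws i R w0 : decomp Ws (i :: R) -> w0 \in Ws ->
  (forall z, 0 < pair_mult (e i) z ->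
     load Ws z <= budget R z + pair_mult (ends w0) z) ->
  decomp (rem w0 Ws) R.
Proof.
move=> [ok once sz fit] w0Ws Hz; split.
- by move=> w /mem_rem /ok.
- by move=> j; have := once j; rewrite (big_rem _ w0Ws) /=; lia.
- by rewrite size_rem // sz.
- move=> z; have := fit z; rewrite budget_cons (load_rem z w0Ws).
  case: (posnP (pair_mult (e i) z)) => [-> | /Hz]; first lia.
  by rewrite (load_rem z w0Ws); lia.
Qed.

Lemma decomp_merge Ws i R w1 w2 w3 : decomp Ws (i :: R) -> w1 \in Ws ->
  w2 \in rem w1 Ws -> lwalk_ok w3 ->
  (forall z, pair_mult (ends w3) z + pair_mult (e i) z =
             pair_mult (ends w1) z + pair_mult (ends w2) z) ->
  perm_eq (labels w3) (labels w1 ++ i :: labels w2) ->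
  decomp (w3 :: rem w2 (rem w1 Ws)) R.
Proof.
move=> [ok once sz fit] w1Ws w2Ws ok3 ends3 labels3; split.
- by move=> w; rewrite inE => /orP [/eqP -> //|/mem_rem /mem_rem /ok].
- move=> j; have := once j.
  rewrite (big_rem _ w1Ws) (big_rem _ w2Ws) /= big_cons (permP labels3).
  by rewrite count_cat /=; lia.
- by rewrite /= !size_rem // sz.
- move=> z; have := fit z; have := ends3 z.
  by rewrite budget_cons (load_rem z w1Ws) (load_rem z w2Ws) /load big_cons; lia.
Qed.

Lemma decomp_step_over x y i R Ws : edge_eq (x, y) (e i) -> decomp Ws (i :: R) ->
  budget R x < load Ws x -> exists Ws', decomp Ws' R.
Proof.
move=> Hxy dWs x_over; have [ok _ _ fit] := dWs.
have xy : x != y by apply: contraTneq (edge_eq_G Hxy) => ->; exact: Girr.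
have ei z : pair_mult (e i) z = (x == z) + (y == z).
  by rewrite -(pair_mult_edge_eq z Hxy).
have [w1 w1Ws w1x] := sum_nat_seq_gt0_ex (leq_ltn_trans (leq0n _) x_over).
case: (leqP (load Ws y) (budget R y + pair_mult (ends w1) y)) => [y_fits|y_over].
  exists (rem w1 Ws); apply: decomp_rem dWs w1Ws _ => z; rewrite ei.
  case: (eqVneq x z) => [<- _|_]; last by case: (eqVneq y z) => [<-|].
  by have := fit x; rewrite budget_cons ei eqxx eq_sym (negPf xy) /=; lia.
have [w2 w2Ws w2y] : exists2 w2, w2 \in rem w1 Ws & 0 < pair_mult (ends w2) y.
  have : 0 < load (rem w1 Ws) y by move: y_over; rewrite (load_rem y w1Ws); lia.
  exact: sum_nat_seq_gt0_ex.
have [a [rs1 [bl1 [W1 E1 P1]]]] := walk_to (ok _ w1Ws) w1x.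
have [b [rs2 [bl2 [W2 E2 P2]]]] := walk_from (ok _ (mem_rem w2Ws)) w2y.
exists ((a, b, rs1 ++ i :: rs2, bl1 ++ bl2) :: rem w2 (rem w1 Ws)).
apply: decomp_merge dWs w1Ws w2Ws _ _ _.
- exact: walk_cat W1 Hxy W2.
- by move=> z; rewrite -E1 -E2 ei /pair_mult /=; lia.
- by rewrite /= perm_cat // perm_cons.
Qed.

Lemma decomp_step Ws i R : decomp Ws (i :: R) -> exists Ws', decomp Ws' R.
Proof.
move=> dWs; have [_ _ sz fit] := dWs.
case Ei: (e i) => [x y].
have Hxy : edge_eq (x, y) (e i) by rewrite Ei edge_eq_refl.
case: (ltnP (budget R x) (load Ws x)) => [x_over|x_fits].
  exact: decomp_step_over Hxy dWs x_over.
case: (ltnP (budget R y) (load Ws y)) => [y_over|y_fits].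
  exact: decomp_step_over (edge_eq_trans (edge_eq_swap y x) Hxy) dWs y_over.
have [w0 w0Ws] : exists w0, w0 \in Ws.
  by case: Ws sz {dWs fit x_fits y_fits} => // w0 Ws _; exists w0; exact: mem_head.
exists (rem w0 Ws); apply: decomp_rem dWs w0Ws _ => z; rewrite Ei {1}/pair_mult /=.
case: (eqVneq x z) => [<- _|_]; first lia.
by case: (eqVneq y z) => [<- _|]; first lia.
Qed.

Lemma decomp_nil Ws : decomp Ws [::] -> exists u v rs bl,
  [/\ walk u v rs bl, uniq rs & forall x, pair_mult (u, v) x <= m x].
Proof.
move=> [ok once sz fit].
case: Ws sz ok once fit => [|[[[u v] rs] bl] [|? ?]] //= _ ok once fit.
exists u, v, rs, bl; split.
- exact: ok (mem_head _ _).
- apply: count_mem_uniq => j; have := once j; rewrite big_seq1 -has_pred1 has_count.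
  by case: (count_mem j rs) => [|[]].
- by move=> x; have := fit x; rewrite /load /budget !big_seq1 big_nil addn0.
Qed.

Lemma decomp_walk Ws R : decomp Ws R -> exists u v rs bl,
  [/\ walk u v rs bl, uniq rs & forall x, pair_mult (u, v) x <= m x].
Proof.
elim: R Ws => [|i R IH] Ws; first exact: decomp_nil.
by case/decomp_step => Ws' /IH.
Qed.

Lemma walk_within_budget F : gedges F -> size F = s.+1 ->
  (forall x, \sum_(f <- F) pair_mult f x <= m x + \sum_(j < s) pair_mult (e j) x) ->
  exists u v rs bl,
    [/\ walk u v rs bl, uniq rs & forall x, pair_mult (u, v) x <= m x].
Proof.
move=> eF sF fit; apply: (@decomp_walk [seq (f, [::], [:: f]) | f <- F] (enum 'I_s)).
split.
- by move=> w /mapP [[a b] fF ->]; apply: walk_edge; apply: (eF _ fF).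
- by move=> j; rewrite big_map big1 // addn0 count_uniq_mem ?enum_uniq // mem_enum.
- by rewrite size_map sF size_enum_ord.
- by move=> x; rewrite /load /budget big_map big_enum; exact: fit.
Qed.

End Decomposition.
End Walks.
End Graph.

Local Open Scope ring_scope.

Section GeneratedIdeal.
Variables (R : comRingType) (A : R -> Prop).

Lemma gen_ideal_gen g : A g -> gen_ideal A g.
Proof. by move=> Ag; exists 1%N, (fun _ => 1), (fun _ => g); rewrite big_ord1 mul1r. Qed.

Lemma gen_idealMl c p : gen_ideal A p -> gen_ideal A (c * p).
Proof.
case=> m [c' [g [Ag ->]]]; exists m, (fun i => c * c' i), g; split => //.
by rewrite mulr_sumr; apply: eq_bigr => i _; rewrite mulrA.
Qed.

End GeneratedIdeal.

Section EdgeIdealPowers.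
Variables (K : fieldType) (n : nat) (G : rel 'I_n).
Implicit Types (f : 'I_n * 'I_n) (F : seq ('I_n * 'I_n)) (p q : {mpoly K[n]}).

Definition edge_mnm f : 'X_{1..n} := (U_(f.1) + U_(f.2))%MM.

Definition edges_mnm F : 'X_{1..n} := (\sum_(f <- F) edge_mnm f)%MM.

Lemma edge_mnmE f x : edge_mnm f x = pair_mult f x.
Proof. by rewrite mnmDE !mnm1E. Qed.

Lemma edges_mnmE F x : edges_mnm F x = (\sum_(f <- F) pair_mult f x)%N.
Proof. by rewrite mnm_sumE; apply: eq_bigr => f _; rewrite edge_mnmE. Qed.

Lemma mpolyX_edge f : 'X_[edge_mnm f] = 'X_f.1 * 'X_f.2 :> {mpoly K[n]}.
Proof. exact: mpolyXD. Qed.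

Lemma mpolyX_edges F : 'X_[edges_mnm F] = \prod_(f <- F) ('X_f.1 * 'X_f.2) :> {mpoly K[n]}.
Proof.
elim: F => [|f F IH]; first by rewrite /edges_mnm !big_nil mpolyX0.
by rewrite /edges_mnm !big_cons mpolyXD -IH mpolyX_edge.
Qed.

Definition edge_divisible k p := forall mm, mm \in msupp p ->
  exists F, [/\ size F = k, gedges G F & (edges_mnm F <= mm)%MM].

Lemma edge_divisible0 p : edge_divisible 0 p.
Proof.
by move=> mm _; exists [::]; split => //; apply/mnm_lepP => x; rewrite edges_mnmE big_nil.
Qed.

Lemma edge_divisibleD k p q :
  edge_divisible k p -> edge_divisible k q -> edge_divisible k (p + q).
Proof. by move=> Hp Hq mm /msuppD_le; rewrite mem_cat => /orP [/Hp|/Hq]. Qed.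

Lemma edge_divisibleM a b p q :
  edge_divisible a p -> edge_divisible b q -> edge_divisible (a + b) (p * q).
Proof.
move=> Hp Hq mm /msuppM_le /allpairsP [[m1 m2] /= [/Hp [F1 [s1 e1 l1]] /Hq [F2 [s2 e2 l2]] ->]].
exists (F1 ++ F2); split.
- by rewrite size_cat s1 s2.
- by move=> f; rewrite mem_cat => /orP [/e1|/e2].
- apply/mnm_lepP => x; rewrite edges_mnmE big_cat mnmDE -!edges_mnmE.
  by apply: leq_add; apply/mnm_lepP.
Qed.

Lemma edge_divisible_gen k (A : {mpoly K[n]} -> Prop) p :
  (forall g, A g -> edge_divisible k g) -> gen_ideal A p -> edge_divisible k p.
Proof.
move=> HA [m [c [g [Ag ->]]]]; apply: (big_ind (edge_divisible k)).
- by move=> mm; rewrite msupp0.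
- exact: edge_divisibleD.
- by move=> i _; rewrite -[k]add0n; apply: edge_divisibleM (@edge_divisible0 (c i)) (HA _ (Ag i)).
Qed.

Lemma edge_pow_divisible k p : ideal_pow (@edge_ideal K n G) k p -> edge_divisible k p.
Proof.
apply: edge_divisible_gen => _ [g [Ig ->]]; elim: k g Ig => [|k IH] g Ig.
  exact: edge_divisible0.
rewrite big_ord_recr /= -[X in edge_divisible X _]addn1; apply: edge_divisibleM; first by apply: IH => i.
apply: edge_divisible_gen (Ig ord_max) => _ [a [b [Gab ->]]] mm.
rewrite -(mpolyX_edge (a, b)) msuppX inE => /eqP ->.
exists [:: (a, b)]; split => //; first by move=> f; rewrite inE => /eqP ->.
by rewrite /edges_mnm big_seq1 lepm_refl.
Qed.

Lemma edges_pow F : gedges G F ->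
  ideal_pow (@edge_ideal K n G) (size F) (\prod_(f <- F) ('X_f.1 * 'X_f.2)).
Proof.
move=> GF; apply: gen_ideal_gen; set f_ := tnth (in_tuple F).
exists (fun i => 'X_(f_ i).1 * 'X_(f_ i).2); split; last exact: big_tnth.
by move=> i; apply: gen_ideal_gen; exists (f_ i).1, (f_ i).2; split => //; apply/GF/mem_tnth.
Qed.

Lemma edge_pow_monomialP k mm : ideal_pow (@edge_ideal K n G) k 'X_[mm] <->
  exists F, [/\ size F = k, gedges G F & (edges_mnm F <= mm)%MM].
Proof.
split=> [/edge_pow_divisible pow_mm | [F [<- GF leF]]].
  by apply: pow_mm; rewrite msuppX mem_head.
rewrite -(submK leF) mpolyXD mpolyX_edges.
exact/gen_idealMl/edges_pow.
Qed.

Lemma colon_edge_powP k E mm :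
  colon (ideal_pow (@edge_ideal K n G) k) (\prod_(f <- E) ('X_f.1 * 'X_f.2)) 'X_[mm] <->
  exists F, [/\ size F = k, gedges G F &
    forall x, \sum_(f <- F) pair_mult f x <= mm x + \sum_(f <- E) pair_mult f x]%N.
Proof.
rewrite /colon -mpolyX_edges -mpolyXD edge_pow_monomialP.
split=> [] [F [sF GF leF]]; exists F; split => //.
- by move=> x; move/mnm_lepP: leF => /(_ x); rewrite mnmDE !edges_mnmE.
- by apply/mnm_lepP => x; rewrite mnmDE !edges_mnmE.
Qed.

End EdgeIdealPowers.

Theorem theorem6p7 (K : fieldType) (n : nat) (G : rel 'I_n) (s : nat)
  (e : 'I_s -> 'I_n * 'I_n) :
  simple_graph G ->
  (1 <= s)%N ->
  (forall i, G (e i).1 (e i).2) ->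
  forall m : 'X_{1..n},
    min_mon_gen (colon (ideal_pow (@edge_ideal K n G) s.+1)
                       (\prod_(i < s) ('X_(e i).1 * 'X_(e i).2))) m ->
    exists u v : 'I_n,
      'X_[m] = 'X_u * 'X_v :> {mpoly K[n]} /\
      (G u v \/ even_connected G e u v).
Proof.
move=> [Gsym Girr] _ eG m [m_colon m_min].
have sum_e x : (\sum_(f <- map e (enum 'I_s)) pair_mult f x = \sum_(j < s) pair_mult (e j) x)%N.
  by rewrite big_map big_enum.
have prod_e : \prod_(i < s) ('X_(e i).1 * 'X_(e i).2) =
    \prod_(f <- map e (enum 'I_s)) ('X_f.1 * 'X_f.2) :> {mpoly K[n]}.
  by rewrite big_map big_enum.
rewrite prod_e in m_colon m_min.
have /colon_edge_powP [F [sF GF fitF]] := m_colon.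
have [u [v [rs [bl [W Urs uv_m]]]]] : exists u v rs bl,
    [/\ walk G e u v rs bl, uniq rs & forall x, pair_mult (u, v) x <= m x]%N.
  apply: (walk_within_budget Gsym eG Girr (m := fun x => m x) GF sF) => x.
  by rewrite -sum_e; exact: fitF.
have uv_colon : colon (ideal_pow (@edge_ideal K n G) s.+1)
    (\prod_(f <- map e (enum 'I_s)) ('X_f.1 * 'X_f.2)) 'X_[edge_mnm (u, v)].
  apply/colon_edge_powP; have [F' [sF' GF' sumF']] := walk_complete eG W Urs.
  by exists F'; split => // x; rewrite sumF' sum_e edge_mnmE.
have uv_le : (edge_mnm (u, v) <= m)%MM by apply/mnm_lepP => x; rewrite edge_mnmE.
have uvE : edge_mnm (u, v) = m.
  by apply/eqP/contraT => uv_neq; case: (m_min _ uv_le uv_neq uv_colon).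
exists u, v; split; first by rewrite -uvE mpolyX_edge.
exact: walk_edge_or_even_connected W Urs.
Qed.
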